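(* Consider a point $x^*$ with associated class $y^*$ and a perturbation radius $\epsilon>0$. Assume that $\operatorname{arg\,max}_{c \in \{1,\ldots,C\} } \hat{\mathbb{E}}^N_{IBP,\epsilon}(x^* ) = y^*$. Then \[ \operatorname{arg\,max}_{c \in \{1,\ldots,C\} } \hat{\mathbb{E}}^N(\bar{x}) = y^* \quad \text{for all } \bar{x} \text{ such that } |x^*-\bar{x}| \leq \epsilon. \] As a consequence, given test points $x_i^*$ with class labels $y_i^*$, $i=1,\ldots,m$, the robust accuracy satisfies \[ \mathcal{R}_\epsilon \geq \frac{1}{m}\sum_{i=1}^m \mathbb{I}\left[ \operatorname{arg\,max}_{c \in \{1,\ldots,C\} } \hat{\mathbb{E}}^N_{IBP,\epsilon}(x_i^* ) = y_i^* \right]=:\mathcal{R}_\epsilon^{IBP}. \]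
   Context: A neural network $f^w:\mathbb{R}^n\to\mathbb{R}^C$ with weights $w$ is given, with a (approximate) posterior over weights $p(w\mid\mathcal{D})$. With $w_1,\dots,w_N$ fixed samples from the posterior and $\sigma$ the softmax, the empirical predictor is $\hat{\mathbb{E}}^N(x)=\frac1N\sum_{i=1}^N\sigma(f^{w_i}(x))$, and the predicted class is its argmax. For $\epsilon>0$ and a given norm $|\cdot|$ (an $\ell_\infty$-ball for IBP), the robust accuracy on test points $x_i^*$ with labels $c_i^*$ is $\mathcal{R}_\epsilon=\frac1m\sum_{i=1}^m\mathbb{I}[\forall \bar x \text{ with } |x_i^*-\bar x|\le\epsilon:\ \operatorname{arg\,max}_c \hat{\mathbb{E}}^N(\bar x)=c_i^*]$, where $\mathbb{I}[\cdot]$ is the indicator. Interval Bound Propagation (IBP) applied to the network with weights $w$ and the $\epsilon$-ball around $x$ yields logit bounds $f^{w,L,\epsilon}\le f^w(x')\le f^{w,U,\epsilon}$ valid for all $x'$ in the ball (propagating centre $\hat\mu_k=(\phi^U_{k-1}+\phi^L_{k-1})/2$ and radius $\hat r_k=(\phi^U_{k-1}-\phi^L_{k-1})/2$ through each layer as $\mu_k=W_{k-1}\hat\mu_k+b_{k-1}$, $r_k=|W_{k-1}|\hat r_k$, bounds $\mu_k\pm r_k$, then through the monotone activation). For true class $y$ define $f^{w,\epsilon}_{LB}(x)$ with $j$-th entry $f^{w,U,\epsilon}_j$ if $j\ne y$ and $f^{w,L,\epsilon}_j$ if $j=y$; for $c'\ne y$ define $f^{w,\epsilon,c'}_{UB}(x)$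 with $j$-th entry $f^{w,L,\epsilon}_j$ if $j\ne c'$ and $f^{w,U,\epsilon}_j$ if $j=c'$. Set $\hat{\mathbb{E}}^{N,\epsilon}_{y,LB}=\frac1N\sum_i\sigma_y(f^{w_i,\epsilon}_{LB}(x))$ and $\hat{\mathbb{E}}^{N,\epsilon}_{c',UB}=\frac1N\sum_i\sigma_{c'}(f^{w_i,\epsilon,c'}_{UB}(x))$. The worst-case IBP predictor $\hat{\mathbb{E}}^N_{IBP,\epsilon}(x)\in\mathbb{R}^C$ has $y$-th entry $\hat{\mathbb{E}}^{N,\epsilon}_{y,LB}$ and $c'$-th entry $\hat{\mathbb{E}}^{N,\epsilon}_{c',UB}$ for $c'\ne y$. *)

From HB Require Import structures.
From mathcomp Require Import all_boot all_order all_algebra.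
From mathcomp Require Import all_classical all_reals all_analysis.
Set Implicit Arguments. Unset Strict Implicit. Unset Printing Implicit Defensive.
Import Order.TTheory GRing.Theory Num.Theory.
Local Open Scope ring_scope.

(* The output layer is
   expressed by choosing the identity as activation (or any activation);
   NOut is the empty network (identity). *)
Inductive net (R : Type) : nat -> nat -> Type :=
| NOut n : net R n n
| NLay n k m : 'M[R]_(k, n) -> 'cV[R]_k -> (R -> R) -> net R k m -> net R n m.
Arguments NOut {R n}.
Arguments NLay {R n k m}.

Fixpoint net_eval {R : pzRingType} {n m} (f : net R n m) : 'cV[R]_n -> 'cV[R]_m :=
  match f in net _ n m return 'cV[R]_n -> 'cV[R]_m with
  | NOut _ => fun x => x
  | NLay _ _ _ W b a g => fun x => net_eval g (map_mx a (W *m x + b))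
  end.

Fixpoint net_mono {R : numDomainType} {n m} (f : net R n m) : Prop :=
  match f with
  | NOut _ => True
  | NLay _ _ _ W b a g => {homo a : s t / s <= t} /\ net_mono g
  end.

Fixpoint ibp {R : numFieldType} {n m} (f : net R n m) :
    'cV[R]_n -> 'cV[R]_n -> 'cV[R]_m * 'cV[R]_m :=
  match f in net _ n m return 'cV[R]_n -> 'cV[R]_n -> 'cV[R]_m * 'cV[R]_m with
  | NOut _ => fun l u => (l, u)
  | NLay _ _ _ W b a g => fun l u =>
      let mu := (2%:R)^-1 *: (u + l) in
      let r := (2%:R)^-1 *: (u - l) in
      let muk := W *m mu + b in
      let rk := map_mx Num.norm W *m r in
      ibp g (map_mx a (muk - rk)) (map_mx a (muk + rk))
  end.

Definition ibp_ball {R : numFieldType} {n m} (f : net R n m) (x : 'cV[R]_n) (eps : R) :=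
  ibp f (x - const_mx eps) (x + const_mx eps).

Definition linf_ball {R : numDomainType} {n} (x xb : 'cV[R]_n) (eps : R) : Prop :=
  forall i, `|x i 0 - xb i 0| <= eps.

Definition softmax {R : realType} {C} (z : 'cV[R]_C) (j : 'I_C) : R :=
  expR (z j 0) / \sum_(k < C) expR (z k 0).

Definition Ehat {R : realType} {n C N} (ws : 'I_N -> net R n C) (x : 'cV[R]_n)
  (c : 'I_C) : R :=
  N%:R^-1 * \sum_(i < N) softmax (net_eval (ws i) x) c.

Definition f_LB {R : realType} {n C} (f : net R n C) (x : 'cV[R]_n) (eps : R)
  (y : 'I_C) : 'cV[R]_C :=
  \col_j (if j == y then (ibp_ball f x eps).1 j 0 else (ibp_ball f x eps).2 j 0).

Definition f_UB {R : realType} {n C} (f : net R n C) (x : 'cV[R]_n) (eps : R)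
  (c' : 'I_C) : 'cV[R]_C :=
  \col_j (if j == c' then (ibp_ball f x eps).2 j 0 else (ibp_ball f x eps).1 j 0).

Definition Ehat_IBP {R : realType} {n C N} (ws : 'I_N -> net R n C)
  (x : 'cV[R]_n) (eps : R) (y : 'I_C) (c : 'I_C) : R :=
  if c == y then N%:R^-1 * \sum_(i < N) softmax (f_LB (ws i) x eps y) y
  else N%:R^-1 * \sum_(i < N) softmax (f_UB (ws i) x eps c) c.

Definition argmax_is {C} {R : numDomainType} (v : 'I_C -> R) (y : 'I_C) : Prop :=
  forall c, c != y -> v c < v y.

Definition ind {R : numDomainType} (P : Prop) : R := (asbool P)%:R.

Definition robust_acc {R : realType} {n C N m} (ws : 'I_N -> net R n C)
  (eps : R) (xs : 'I_m -> 'cV[R]_n) (ys : 'I_m -> 'I_C) : R :=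
  m%:R^-1 * \sum_(i < m)
    ind (forall xb, linf_ball (xs i) xb eps -> argmax_is (Ehat ws xb) (ys i)).

Definition robust_acc_IBP {R : realType} {n C N m} (ws : 'I_N -> net R n C)
  (eps : R) (xs : 'I_m -> 'cV[R]_n) (ys : 'I_m -> 'I_C) : R :=
  m%:R^-1 * \sum_(i < m) ind (argmax_is (Ehat_IBP ws (xs i) eps (ys i)) (ys i)).

(** IBP propagates, for every weight sample, entrywise logit bounds valid on the
    whole eps-ball; interval arithmetic for an affine layer is the triangle
    inequality [|W x - W mu| <= |W| |x - mu|], and monotone activations preserve
    order.  Softmax at a class increases with its own logit and decreases with
    the others, so the worst-case IBP predictor bounds the empirical predictor
    from below at the true class and from above at every other class; a
    certified argmax is therefore the argmax everywhere on the ball. *)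
From mathcomp Require Import all_boot all_order all_algebra.
From mathcomp Require Import all_classical all_reals all_analysis.
From mathcomp Require Import lra.
Set Implicit Arguments. Unset Strict Implicit. Unset Printing Implicit Defensive.
Import Order.TTheory GRing.Theory Num.Theory.
Local Open Scope ring_scope.

Lemma ler_mulmx_norm_dist (R : numDomainType) k n (W : 'M[R]_(k, n))
    (x mu r : 'cV[R]_n) :
  (forall j, `|x j 0 - mu j 0| <= r j 0) ->
  forall i, `|(W *m x) i 0 - (W *m mu) i 0| <= (map_mx Num.norm W *m r) i 0.
Proof.
move=> hxr i; rewrite !mxE -sumrB; apply: le_trans (ler_norm_sum _ _ _) _.
apply: ler_sum => j _; rewrite !mxE -mulrBr normrM.
exact: ler_wpM2l.
Qed.

Lemma dist_midpoint_le (R : realFieldType) (l x u : R) :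
  l <= x <= u -> `|x - 2%:R^-1 * (u + l)| <= 2%:R^-1 * (u - l).
Proof. by case/andP=> hl hu; rewrite ler_norml; apply/andP; split; lra. Qed.

Lemma ibp_sound (R : realFieldType) n m (f : net R n m) : net_mono f ->
  forall l u x : 'cV[R]_n, (forall i, l i 0 <= x i 0 <= u i 0) ->
  forall j, (ibp f l u).1 j 0 <= net_eval f x j 0 <= (ibp f l u).2 j 0.
Proof.
elim: f => [//|n0 k m0 W b a g IH] /= [a_mono g_mono] l u x hx.
apply: IH => // i.
have hdist : forall j, `|x j 0 - (2%:R^-1 *: (u + l)) j 0|
                       <= (2%:R^-1 *: (u - l)) j 0.
  by move=> j; rewrite !mxE; apply: dist_midpoint_le.
move: (ler_mulmx_norm_dist W hdist i); rewrite ler_norml => /andP [h1 h2].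
by rewrite !mxE in h1 h2 *; apply/andP; split; apply: a_mono; lra.
Qed.

Lemma ibp_ball_sound (R : realFieldType) n m (f : net R n m)
    (x xb : 'cV[R]_n) (eps : R) :
  net_mono f -> linf_ball x xb eps ->
  forall j, (ibp_ball f x eps).1 j 0 <= net_eval f xb j 0
            <= (ibp_ball f x eps).2 j 0.
Proof.
move=> f_mono hball; apply: ibp_sound => // i.
by move: (hball i); rewrite ler_norml !mxE => /andP [h1 h2]; apply/andP; split; lra.
Qed.

Lemma ler_softmax (R : realType) C (w z : 'cV[R]_C) (y : 'I_C) :
  w y 0 <= z y 0 -> (forall j, j != y -> z j 0 <= w j 0) ->
  softmax w y <= softmax z y.
Proof.
move=> hy hj; rewrite /softmax (bigD1 y) //= [X in _ <= _ / X](bigD1 y) //=.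
set a' := expR (w y 0); set a := expR (z y 0).
set s' := \sum_(i < C | i != y) expR (w i 0).
set s := \sum_(i < C | i != y) expR (z i 0).
have ha' : 0 < a' by apply: expR_gt0.
have haa : a' <= a by rewrite ler_expR.
have hs : 0 <= s by apply: sumr_ge0 => i _; apply: expR_ge0.
have hss : s <= s' by apply: ler_sum => i hi; rewrite ler_expR; apply: hj.
rewrite ler_pdivrMr; last by lra.
rewrite mulrAC ler_pdivlMr; last by lra.
nra.
Qed.

Section EmpiricalPredictorBounds.
Variables (R : realType) (n C N : nat) (ws : 'I_N -> net R n C).
Hypothesis ws_mono : forall i, net_mono (ws i).
Variables (x xb : 'cV[R]_n) (eps : R) (y : 'I_C).
Hypothesis xb_in_ball : linf_ball x xb eps.

Let ler_mean (F G : 'I_N -> R) :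
  (forall i, F i <= G i) -> N%:R^-1 * \sum_i F i <= N%:R^-1 * \sum_i G i.
Proof. by move=> hFG; apply: ler_wpM2l; [rewrite invr_ge0|apply: ler_sum]. Qed.

Lemma Ehat_IBP_le_Ehat : Ehat_IBP ws x eps y y <= Ehat ws xb y.
Proof.
rewrite /Ehat_IBP eqxx; apply: ler_mean => i.
have hb := ibp_ball_sound (ws_mono i) xb_in_ball.
apply: ler_softmax => [|j hj]; rewrite mxE ?eqxx ?(negbTE hj).
- by case/andP: (hb y).
- by case/andP: (hb j).
Qed.

Lemma Ehat_le_Ehat_IBP c : c != y -> Ehat ws xb c <= Ehat_IBP ws x eps y c.
Proof.
move=> hc; rewrite /Ehat_IBP (negbTE hc); apply: ler_mean => i.
have hb := ibp_ball_sound (ws_mono i) xb_in_ball.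
apply: ler_softmax => [|j hj]; rewrite mxE ?eqxx ?(negbTE hj).
- by case/andP: (hb c).
- by case/andP: (hb j).
Qed.

Lemma argmax_Ehat_IBP_robust :
  argmax_is (Ehat_IBP ws x eps y) y -> argmax_is (Ehat ws xb) y.
Proof.
move=> hcert c hc; apply: le_lt_trans (Ehat_le_Ehat_IBP hc) _.
exact: lt_le_trans (hcert c hc) Ehat_IBP_le_Ehat.
Qed.

End EmpiricalPredictorBounds.

Lemma ler_ind (R : numDomainType) (P Q : Prop) : (P -> Q) -> ind P <= ind Q :> R.
Proof. by move=> hPQ; rewrite /ind; case: asboolP => [/hPQ/asboolT ->|]. Qed.

Theorem theorem1 (R : realType) (n C N : nat) (ws : 'I_N -> net R n C)
  (hmono : forall i, net_mono (ws i)) (eps : R) (heps : 0 < eps) :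
  (forall (xs : 'cV[R]_n) (ys : 'I_C),
     argmax_is (Ehat_IBP ws xs eps ys) ys ->
     forall xb : 'cV[R]_n, linf_ball xs xb eps -> argmax_is (Ehat ws xb) ys)
  /\
  (forall (m : nat) (xs : 'I_m -> 'cV[R]_n) (ys : 'I_m -> 'I_C),
     robust_acc_IBP ws eps xs ys <= robust_acc ws eps xs ys).
Proof.
have robust xs ys : argmax_is (Ehat_IBP ws xs eps ys) ys ->
    forall xb, linf_ball xs xb eps -> argmax_is (Ehat ws xb) ys.
  by move=> hcert xb hball; exact: argmax_Ehat_IBP_robust hcert.
split=> // m xs ys; apply: ler_wpM2l; first by rewrite invr_ge0.
by apply: ler_sum => i _; apply: ler_ind; apply: robust.
Qed.
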